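(* For every countable graph $G$ with $G < K_\omega$ there exists a countable graph $G''$ with $G < G'' < K_\omega$; that is, no pair $(G, K_\omega)$ is a gap in the class of all countable graphs.
   Context: All graphs are simple, undirected and loopless. $G \le H$ means there is a homomorphism (edge-preserving vertex map) $G \to H$; $G < H$ means $G \le H$ and $H \not\le G$. $K_\omega$ is the countably infinite complete graph. For a class $\mathcal K$ of graphs, a pair $(G_1,G_2)$ with $G_1,G_2\in\mathcal K$, $G_1 < G_2$ is a gap in $\mathcal K$ if there is no $G \in \mathcal K$ with $G_1 < G < G_2$. *)

(* Countable simple graphs, represented (up to isomorphism)
   with vertex set a subset of nat. *)

Record cgraph : Type := CGraph {
  V : nat -> Prop;
  E : nat -> nat -> Prop;
  E_sub : forall x y, E x y -> V x /\ V y;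
  E_sym : forall x y, E x y -> E y x;
  E_irr : forall x, ~ E x x
}.

Definition hom_le (G H : cgraph) : Prop :=
  exists f : nat -> nat,
    (forall x, V G x -> V H (f x)) /\
    (forall x y, E G x y -> E H (f x) (f y)).

Definition hom_lt (G H : cgraph) : Prop := hom_le G H /\ ~ hom_le H G.

Definition Komega : cgraph.
Proof.
  refine (CGraph (fun _ => True) (fun x y => x <> y) _ _ _).
  - intros; split; exact I.
  - intros x y H e; apply H; symmetry; exact e.
  - intros x H; apply H; reflexivity.
Defined.

(* Add a universal vertex to G, obtaining the cone over G.  A homomorphism
   from the cone back to G sends the apex to a vertex adjacent to the whole
   image of G, so iterating it from the apex yields an infinite clique in G.
   A homomorphism from K_omega to the cone is injective, hence hits the apex
   at most once, and beyond that point it lands in G.  Both would give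
   K_omega <= G, so G < cone G < K_omega whenever G < K_omega. *)

From Stdlib Require Import Arith Lia Classical.

Lemma hom_le_Komega (G : cgraph) : hom_le G Komega.
Proof.
  exists (fun x => x); split; simpl; auto.
  intros x y Hxy <-; exact (E_irr G x Hxy).
Qed.

Lemma Komega_le_of_clique (G : cgraph) (v : nat -> nat) :
  (forall k, V G (v k)) -> (forall i j, i < j -> E G (v i) (v j)) ->
  hom_le Komega G.
Proof.
  intros vV vE; exists v; split; simpl; auto.
  intros x y Hxy; destruct (Nat.lt_total x y) as [H | [H | H]].
  - exact (vE x y H).
  - contradiction.
  - exact (E_sym G _ _ (vE y x H)).
Qed.

Lemma hom_from_Komega_inj (G : cgraph) (h : nat -> nat) :
  (forall x y, x <> y -> E G (h x) (h y)) ->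
  forall a b, a <> b -> h a <> h b.
Proof.
  intros hE a b Hab e; apply (E_irr G (h b)); rewrite <- e at 1; exact (hE a b Hab).
Qed.

Section Cone.
Variable G : cgraph.

(* Vertex [0] is the apex; vertex [x] of [G] becomes [S x]. *)
Definition cone_V (a : nat) : Prop := a = 0 \/ exists x, a = S x /\ V G x.

Definition cone_E (a b : nat) : Prop :=
  (a = 0 /\ exists y, b = S y /\ V G y) \/
  (b = 0 /\ exists x, a = S x /\ V G x) \/
  (exists x y, a = S x /\ b = S y /\ E G x y).

Lemma cone_E_sub x y : cone_E x y -> cone_V x /\ cone_V y.
Proof.
  unfold cone_E, cone_V.
  intros [[-> [z [-> Hz]]] | [[-> [z [-> Hz]]] | [u [w [-> [-> Huw]]]]]].
  - split; [left | right; exists z]; auto.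
  - split; [right; exists z | left]; auto.
  - destruct (E_sub G _ _ Huw); split; right; eauto.
Qed.

Lemma cone_E_sym x y : cone_E x y -> cone_E y x.
Proof.
  unfold cone_E; intros [H | [H | [u [w [-> [-> Huw]]]]]].
  - right; left; exact H.
  - left; exact H.
  - right; right; exists w, u; auto using E_sym.
Qed.

Lemma cone_E_irr x : ~ cone_E x x.
Proof.
  unfold cone_E.
  intros [[-> [z [e _]]] | [[-> [z [e _]]] | [u [w [-> [e Huw]]]]]];
    try discriminate.
  injection e as <-; exact (E_irr G u Huw).
Qed.

Definition Cone : cgraph := CGraph cone_V cone_E cone_E_sub cone_E_sym cone_E_irr.

Lemma cone_V_S x : V Cone (S x) -> V G x.
Proof. intros [e | [z [e Hz]]]; [discriminate | injection e as ->; exact Hz]. Qed.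

Lemma cone_E_S x y : E Cone (S x) (S y) -> E G x y.
Proof.
  intros [[e _] | [[e _] | [u [w [ex [ey Huw]]]]]]; try discriminate.
  injection ex as ->; injection ey as ->; exact Huw.
Qed.

Lemma hom_le_cone : hom_le G Cone.
Proof.
  exists S; split; simpl; unfold cone_V, cone_E; intros.
  - right; eauto.
  - right; right; eauto.
Qed.

Lemma Komega_le_of_cone_le : hom_le Cone G -> hom_le Komega G.
Proof.
  intros [f [fV fE]].
  set (g := fun x => f (S x)).
  assert (gE : forall x y, E G x y -> E G (g x) (g y))
    by (intros x y Hxy; apply fE; right; right; eauto).
  assert (apex_V : V G (f 0)) by (apply fV; left; reflexivity).
  assert (apex_E : forall y, V G y -> E G (f 0) (g y))
    by (intros y Hy; apply fE; left; eauto).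
  set (v := fun k => Nat.iter k g (f 0)).
  assert (vV : forall k, V G (v k)).
  { induction k as [| k IHk]; [exact apex_V |].
    apply fV; right; exists (v k); split; [reflexivity | exact IHk]. }
  apply (Komega_le_of_clique G v vV).
  induction i as [| i IHi]; intros [| j] Hij; try lia; simpl.
  - apply apex_E, vV.
  - apply gE, IHi; lia.
Qed.

(* A shift [k] past the (at most one) vertex of K_omega sent to the apex. *)
Lemma Komega_to_cone_avoids_apex (h : nat -> nat) :
  (forall x y, x <> y -> E Cone (h x) (h y)) ->
  exists k, forall n, h (n + k) <> 0.
Proof.
  intro hE.
  destruct (classic (exists m, h m = 0)) as [[m Hm] | Hno].
  - exists (S m); intros n e.
    apply (hom_from_Komega_inj Cone h hE (n + S m) m); [lia | congruence].
  - exists 0; intros n e; apply Hno; eauto.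
Qed.

Lemma Komega_le_of_Komega_le_cone : hom_le Komega Cone -> hom_le Komega G.
Proof.
  intros [h [hV hE]]; simpl in hE.
  destruct (Komega_to_cone_avoids_apex h hE) as [k Hk].
  assert (h_S : forall n, h (n + k) = S (pred (h (n + k)))).
  { intro n; specialize (Hk n); destruct (h (n + k)); [contradiction | reflexivity]. }
  exists (fun n => pred (h (n + k))); split; simpl.
  - intros n _; apply cone_V_S; rewrite <- h_S; exact (hV _ I).
  - intros x y Hxy; apply cone_E_S; rewrite <- !h_S; apply hE; lia.
Qed.

End Cone.

Theorem mainTheorem4 :
  forall G : cgraph, hom_lt G Komega ->
    exists G'' : cgraph, hom_lt G G'' /\ hom_lt G'' Komega.
Proof.
  intros G [_ HK].
  exists (Cone G); split; split.
  - exact (hom_le_cone G).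
  - intro H; exact (HK (Komega_le_of_cone_le G H)).
  - exact (hom_le_Komega (Cone G)).
  - intro H; exact (HK (Komega_le_of_Komega_le_cone G H)).
Qed.
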